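(* Assume $b_1\ne b_2, c_1=c_2$ or $b_1=b_2, c_1\ne c_2$. 1. If $a_1=a_2$, then both $\check{f}$ and $\widehat{f}$ have no roots. 2. If $a_1\ne a_2$, then either $\check{f}$ or $\widehat{f}$, but not both, has exactly one root $x_0$ at which it changes sign. The corresponding derivative is nonzero at $x_0$.
   Context: A function $f:\mathbb{R}^+\to\mathbb{R}^+$ is called strongly hyperbolic if: (1) $\lim_{x\to 0+} f(x)=+\infty$ and $\lim_{x\to+\infty} f(x)=0$; (2) $f$ is strictly convex; (3) for each $b\in\mathbb{R}$, $\lim_{x\to+\infty} f(x+b)/f(x)=1$; (4) $f$ is differentiable; (5) $\ln|f'(x)|$ is strictly convex. Let $f_1,f_2$ be strongly hyperbolic functions, let $a_1,a_2>0$ and $b_1,b_2,c_1,c_2\in\mathbb{R}$. Define $\check{f}:(\max\{-b_1,-b_2\},+\infty)\to\mathbb{R}$, $\check{f}(x)=a_1f_1(x+b_1)+c_1-a_2f_1(x+b_2)-c_2$, and $\widehat{f}:(-\infty,\min\{-b_1,-b_2\})\to\mathbb{R}$, $\widehat{f}(x)=-a_1f_2(-x-b_1)+c_1+a_2f_2(-x-b_2)-c_2$. *)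

From Stdlib Require Import Reals Lra.
From Coquelicot Require Import Coquelicot.
Open Scope R_scope.

Definition strictly_convex_on (D : R -> Prop) (f : R -> R) : Prop :=
  forall x y t, D x -> D y -> x <> y -> 0 < t < 1 ->
    f (t * x + (1 - t) * y) < t * f x + (1 - t) * f y.

Definition pos (x : R) : Prop := 0 < x.

(* f : R^+ -> R^+ is modelled as f : R -> R, only its values on (0,+oo) matter. *)
Definition strongly_hyperbolic (f : R -> R) : Prop :=
  (forall x, 0 < x -> 0 < f x) /\
  filterlim f (at_right 0) (Rbar_locally p_infty) /\
  filterlim f (Rbar_locally p_infty) (locally 0) /\
  strictly_convex_on pos f /\
  (forall b : R, filterlim (fun x => f (x + b) / f x) (Rbar_locally p_infty) (locally 1)) /\
  (forall x, 0 < x -> ex_derive f x) /\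
  strictly_convex_on pos (fun x => ln (Rabs (Derive f x))).

Definition fcheck (f1 : R -> R) (a1 a2 b1 b2 c1 c2 : R) (x : R) : R :=
  a1 * f1 (x + b1) + c1 - a2 * f1 (x + b2) - c2.

Definition fhat (f2 : R -> R) (a1 a2 b1 b2 c1 c2 : R) (x : R) : R :=
  - a1 * f2 (- x - b1) + c1 + a2 * f2 (- x - b2) - c2.

Definition check_dom (b1 b2 : R) (x : R) : Prop := Rmax (- b1) (- b2) < x.
Definition hat_dom (b1 b2 : R) (x : R) : Prop := x < Rmin (- b1) (- b2).

Definition no_root (D : R -> Prop) (g : R -> R) : Prop :=
  forall x, D x -> g x <> 0.

Definition changes_sign (g : R -> R) (x0 : R) : Prop :=
  exists eps, 0 < eps /\
    forall x y, x0 - eps < x < x0 -> x0 < y < x0 + eps -> g x * g y < 0.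

Definition unique_signchange_root (D : R -> Prop) (g : R -> R) : Prop :=
  exists x0, D x0 /\ g x0 = 0 /\ (forall x, D x -> g x = 0 -> x = x0) /\
    changes_sign g x0 /\ (exists d, is_derive g x0 d /\ d <> 0).

(* Substituting u = x + b or u = - x - b turns each of the two functions, up to
   a nonzero factor, into a function on (0, +oo) of one of two shapes:
   k f u + m with m <> 0, or a f u - b f (u + d) with d > 0.  Since f is a
   decreasing bijection of (0, +oo) onto itself with f' < 0, the first has a
   root iff k m < 0, and that root is simple.  For the second, log-convexity of - f' makes
   f'(t + d) / f'(t) increasing; as f and f(. + d) both vanish at +oo, this
   gives f'(u + d) f u > f (u + d) f'(u), i.e. the ratio f (u + d) / f u has a
   positive derivative.  It tends to 0 at 0+ and to 1 at +oo, so
   a f u = b f (u + d) has exactly one solution, a transversal one, iff a < b.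
   When a1 <> a2 exactly one of the two reduced functions meets the relevant
   condition, and when a1 = a2 neither does. *)

From Pilot Require Import Defs.
From Stdlib Require Import Reals Lra.
From Coquelicot Require Import Coquelicot.
Open Scope R_scope.

Lemma eventually_beyond (P : R -> Prop) (y : R) :
  Rbar_locally p_infty P -> exists t, y < t /\ P t.
Proof.
  intros [M HM]. exists (Rmax M y + 1). split.
  - generalize (Rmax_r M y). lra.
  - apply HM. generalize (Rmax_l M y). lra.
Qed.

Lemma strictly_convex_chord (D : R -> Prop) (phi : R -> R) (a b c : R) :
  strictly_convex_on D phi -> D a -> D c -> a < b < c ->
  phi b * (c - a) < (c - b) * phi a + (b - a) * phi c.
Proof.
  intros Hconv Da Dc Habc.
  set (t := (c - b) / (c - a)).
  assert (Ht : 0 < t < 1).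
  { unfold t; split.
    - apply Rdiv_lt_0_compat; lra.
    - apply Rlt_div_l; lra. }
  assert (Hb : t * a + (1 - t) * c = b) by (unfold t; field; lra).
  pose proof (Hconv a c t Da Dc ltac:(lra) Ht) as H. rewrite Hb in H.
  apply (Rmult_lt_compat_r (c - a)) in H; [| lra].
  replace ((t * phi a + (1 - t) * phi c) * (c - a))
    with ((c - b) * phi a + (b - a) * phi c) in H by (unfold t; field; lra).
  exact H.
Qed.

Lemma strictly_convex_increment (D : R -> Prop) (L : R -> R) (x y d : R) :
  strictly_convex_on D L -> D x -> D (y + d) -> x < y -> 0 < d ->
  L (x + d) + L y < L x + L (y + d).
Proof.
  intros Hconv Dx Dyd Hxy Hd.
  pose proof (strictly_convex_chord D L x (x + d) (y + d) Hconv Dx Dyd ltac:(lra)).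
  pose proof (strictly_convex_chord D L x y (y + d) Hconv Dx Dyd ltac:(lra)).
  apply Rmult_lt_reg_r with (y + d - x); nra.
Qed.

Lemma is_derive_le_slope (g : R -> R) (x l K delta : R) :
  is_derive g x l -> 0 < delta ->
  (forall h, 0 < h < delta -> g (x + h) - g x <= K * h) -> l <= K.
Proof.
  intros Hd Hdelta Hslope. apply is_derive_Reals in Hd.
  destruct (Rle_or_lt l K) as [H | H]; [exact H | exfalso].
  destruct (Hd (l - K) ltac:(lra)) as [dl Hdl].
  pose proof (cond_pos dl). pose proof (Rmin_l (delta / 2) (dl / 2)).
  pose proof (Rmin_r (delta / 2) (dl / 2)).
  pose proof (Rmin_pos (delta / 2) (dl / 2) ltac:(lra) ltac:(lra)).
  set (h := Rmin (delta / 2) (dl / 2)) in *.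
  specialize (Hdl h ltac:(lra) ltac:(rewrite Rabs_right; lra)).
  specialize (Hslope h ltac:(lra)).
  apply Rabs_lt_between in Hdl.
  assert ((g (x + h) - g x) / h <= K) by (apply Rle_div_l; lra).
  lra.
Qed.

Lemma is_derive_continuity_pt (g : R -> R) (x l : R) :
  is_derive g x l -> continuity_pt g x.
Proof.
  intros H. apply is_derive_Reals in H.
  apply derivable_continuous_pt. exact (exist _ l H).
Qed.

Lemma lt_of_derive_pos (phi dphi : R -> R) (a b : R) :
  a < b -> (forall t, a <= t <= b -> is_derive phi t (dphi t)) ->
  (forall t, a < t < b -> 0 < dphi t) -> phi a < phi b.
Proof.
  intros Hab Hd Hpos.
  destruct (MVT_cor2 phi dphi a b Hab) as [c [Hc Hcab]].
  { intros t Ht. apply is_derive_Reals, Hd, Ht. }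
  specialize (Hpos c Hcab). nra.
Qed.

Lemma lt_0_of_increasing_eventually_small (phi dphi : R -> R) (a : R) :
  (forall t, a <= t -> is_derive phi t (dphi t)) ->
  (forall t, a < t -> 0 < dphi t) ->
  (forall eps, 0 < eps -> Rbar_locally p_infty (fun t => phi t < eps)) ->
  phi a < 0.
Proof.
  intros Hd Hpos Hsmall.
  assert (Hmono : forall s t, a <= s < t -> phi s < phi t).
  { intros s t Hst. apply lt_of_derive_pos with dphi; [lra | |];
      intros; [apply Hd | apply Hpos]; lra. }
  destruct (Rlt_or_le (phi a) 0) as [H | H]; [exact H | exfalso].
  pose proof (Hmono a (a + 1) ltac:(lra)).
  destruct (eventually_beyond _ (a + 1) (Hsmall (phi (a + 1)) ltac:(lra)))
    as [t [Ht Hphit]].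
  pose proof (Hmono (a + 1) t ltac:(lra)). lra.
Qed.

Lemma IVT_interv_decr (g : R -> R) (a b : R) :
  a < b -> (forall x, a <= x <= b -> continuity_pt g x) -> g b < 0 < g a ->
  exists x, a <= x <= b /\ g x = 0.
Proof.
  intros Hab Hc Hg.
  destruct (Ranalysis5.IVT_interv (fun x => - g x) a b) as [x [Hx Hgx]];
    [intros; apply continuity_pt_opp, Hc; auto | exact Hab | lra | lra |].
  exists x. split; [exact Hx | lra].
Qed.

Section StronglyHyperbolic.

Variable f : R -> R.
Hypothesis Hf : strongly_hyperbolic f.

Lemma sh_pos x : 0 < x -> 0 < f x.
Proof. destruct Hf as [Hpos _]. exact (Hpos x). Qed.

Lemma sh_ex_derive x : 0 < x -> ex_derive f x.
Proof. destruct Hf as (_ & _ & _ & _ & _ & Hder & _). exact (Hder x). Qed.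

Lemma sh_continuity_pt x : 0 < x -> continuity_pt f x.
Proof.
  intros Hx. apply (is_derive_continuity_pt f x (Derive f x)).
  apply Derive_correct, sh_ex_derive, Hx.
Qed.

Lemma sh_eventually_lt eps : 0 < eps -> Rbar_locally p_infty (fun x => f x < eps).
Proof.
  intros Heps. destruct Hf as (_ & _ & Hlim & _).
  apply (filter_imp (fun x => ball 0 (mkposreal eps Heps) (f x))).
  - intros x Hx. change (Rabs (f x - 0) < eps) in Hx.
    apply Rabs_lt_between in Hx. lra.
  - apply (proj1 (filterlim_locally f 0) Hlim).
Qed.

Lemma sh_exists_gt K : exists x, 0 < x /\ K < f x.
Proof.
  destruct Hf as (_ & Hlim & _).
  destruct (Hlim (fun y => K < y) ltac:(exists K; auto)) as [e He].
  exists (e / 2). split; [pose proof (cond_pos e); lra |].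
  apply He; [| pose proof (cond_pos e); lra].
  change (Rabs (e / 2 - 0) < e). pose proof (cond_pos e).
  rewrite Rabs_right; lra.
Qed.

Lemma sh_decreasing x y : 0 < x -> x < y -> f y < f x.
Proof.
  intros Hx Hxy.
  destruct (Rlt_or_le (f y) (f x)) as [H | H]; [exact H | exfalso].
  destruct (eventually_beyond _ y (sh_eventually_lt (f y) (sh_pos y ltac:(lra))))
    as [z [Hyz Hz]].
  destruct Hf as (_ & _ & _ & Hconv & _).
  pose proof (strictly_convex_chord _ f x y z Hconv Hx ltac:(unfold Defs.pos; lra)
    ltac:(lra)).
  nra.
Qed.

Lemma sh_Derive_lt_0 x : 0 < x -> Derive f x < 0.
Proof.
  intros Hx.
  pose proof (sh_decreasing x (x + 1) Hx ltac:(lra)).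
  apply Rle_lt_trans with (f (x + 1) - f x); [| lra].
  apply (is_derive_le_slope f x _ _ 1); [apply Derive_correct, sh_ex_derive, Hx | lra |].
  intros h Hh. destruct Hf as (_ & _ & _ & Hconv & _).
  pose proof (strictly_convex_chord _ f x (x + h) (x + 1) Hconv Hx
    ltac:(unfold Defs.pos; lra) ltac:(lra)).
  nra.
Qed.

Lemma sh_Derive_shift_lt x y d : 0 < x -> x < y -> 0 < d ->
  Derive f (x + d) * Derive f y < Derive f (y + d) * Derive f x.
Proof.
  intros Hx Hxy Hd.
  assert (Hneg : forall t, 0 < t -> 0 < - Derive f t)
    by (intros t Ht; pose proof (sh_Derive_lt_0 t Ht); lra).
  destruct Hf as (_ & _ & _ & _ & _ & _ & Hlogconv).
  pose proof (strictly_convex_increment _ _ x y d Hlogconv Hx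
    ltac:(unfold Defs.pos; lra) Hxy Hd) as H; cbv beta in H.
  rewrite !Rabs_left in H by (apply sh_Derive_lt_0; lra).
  rewrite <- !ln_mult in H by (apply Hneg; lra).
  apply ln_lt_inv in H; [nra | |]; apply Rmult_lt_0_compat; apply Hneg; lra.
Qed.

Lemma sh_shift_cross_lt x d : 0 < x -> 0 < d ->
  f (x + d) * Derive f x < Derive f (x + d) * f x.
Proof.
  intros Hx Hd.
  pose proof (sh_Derive_lt_0 x Hx). pose proof (sh_Derive_lt_0 (x + d) ltac:(lra)).
  (* [t |-> rho * f t - f (t + d)] increases on [x, +oo) and tends to 0. *)
  set (rho := Derive f (x + d) / Derive f x).
  assert (Hrho : rho * Derive f x = Derive f (x + d)) by (unfold rho; field; lra).
  assert (Hrho_pos : 0 < rho) by (apply Rdiv_neg_neg; assumption).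
  assert (Hphi : rho * f x - f (x + d) < 0).
  { apply (lt_0_of_increasing_eventually_small (fun t => rho * f t - f (t + d))
      (fun t => rho * Derive f t - Derive f (t + d))).
    - intros t Ht. auto_derive; change (fun y : R => f y) with f; [| ring].
      split; [| split]; auto; apply sh_ex_derive; lra.
    - intros t Ht. pose proof (sh_Derive_shift_lt x t d Hx Ht Hd).
      apply Rmult_lt_reg_r with (- Derive f x); [lra |].
      rewrite Rmult_0_l. rewrite <- Hrho in *. nra.
    - intros eps Heps.
      apply (filter_imp (fun t => f t < eps / rho /\ 0 < t)).
      + intros t [Hft Ht]. pose proof (sh_pos (t + d) ltac:(lra)).
        apply Rmult_lt_compat_l with (r := rho) in Hft; [| exact Hrho_pos].
        replace (rho * (eps / rho)) with eps in Hft by (field; lra). lra.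
      + apply filter_and; [apply sh_eventually_lt, Rdiv_lt_0_compat; assumption |].
        exists 0. auto. }
  rewrite <- Hrho. nra.
Qed.

Lemma sh_shift_ratio_lt u v d : 0 < u -> u < v -> 0 < d ->
  f (u + d) * f v < f (v + d) * f u.
Proof.
  intros Hu Huv Hd.
  pose proof (sh_pos u Hu). pose proof (sh_pos v ltac:(lra)).
  assert (Hratio : f (u + d) / f u < f (v + d) / f v).
  { apply (lt_of_derive_pos (fun t => f (t + d) / f t)
      (fun t => (Derive f (t + d) * f t - f (t + d) * Derive f t) / f t ^ 2));
      [exact Huv | |].
    - intros t Ht. pose proof (sh_pos t ltac:(lra)).
      auto_derive; change (fun y : R => f y) with f.
      + repeat split; try (apply sh_ex_derive; lra). lra.
      + field. lra.
    - intros t Ht. pose proof (sh_pos t ltac:(lra)).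
      pose proof (sh_shift_cross_lt t d ltac:(lra) Hd).
      apply Rdiv_lt_0_compat; [lra | apply pow_lt; assumption]. }
  apply (Rmult_lt_compat_r (f u * f v)) in Hratio; [| nra].
  replace (f (u + d) / f u * (f u * f v)) with (f (u + d) * f v) in Hratio
    by (field; lra).
  replace (f (v + d) / f v * (f u * f v)) with (f (v + d) * f u) in Hratio
    by (field; lra).
  exact Hratio.
Qed.

Lemma sh_shift_ratio_eventually_gt d q : q < 1 ->
  Rbar_locally p_infty (fun x => q * f x < f (x + d)).
Proof.
  intros Hq. destruct Hf as (_ & _ & _ & _ & Hratio & _).
  apply (filter_imp (F := Rbar_locally p_infty)
    (fun x => ball 1 (mkposreal (1 - q) ltac:(lra)) (f (x + d) / f x) /\ 0 < x)).
  - intros x [Hx Hxpos]. change (Rabs (f (x + d) / f x - 1) < 1 - q) in Hx.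
    apply Rabs_lt_between in Hx. pose proof (sh_pos x Hxpos).
    apply Rmult_lt_reg_r with (/ f x); [apply Rinv_0_lt_compat; lra |].
    rewrite Rmult_assoc, Rinv_r; lra.
  - apply filter_and; [apply (proj1 (filterlim_locally _ 1) (Hratio d)) | exists 0; auto].
Qed.

Lemma sh_surjective v : 0 < v -> exists u, 0 < u /\ f u = v.
Proof.
  intros Hv.
  destruct (sh_exists_gt v) as [u1 [Hu1 Hv1]].
  destruct (eventually_beyond _ u1 (sh_eventually_lt v Hv)) as [u2 [Hu12 Hv2]].
  destruct (IVT_interv_decr (fun u => f u - v) u1 u2) as [u [Hu Hfu]];
    [exact Hu12 | | lra |].
  - intros u Hu. apply continuity_pt_minus;
      [apply sh_continuity_pt; lra | apply continuity_pt_const; intros ? ?; reflexivity].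
  - exists u. split; lra.
Qed.

End StronglyHyperbolic.

Definition signchange_root_on_pos (G : R -> R) : Prop :=
  exists u0, 0 < u0 /\ G u0 = 0 /\
    (forall u v, 0 < u < u0 -> u0 < v -> G u * G v < 0) /\
    exists dG, is_derive G u0 dG /\ dG <> 0.

Lemma shift_diff_no_root (f : R -> R) (a b d : R) :
  strongly_hyperbolic f -> 0 < b -> b <= a -> 0 < d ->
  no_root Defs.pos (fun u => a * f u - b * f (u + d)).
Proof.
  intros Hf Hb Hba Hd u Hu E. unfold Defs.pos in Hu.
  pose proof (sh_decreasing f Hf u (u + d) Hu ltac:(lra)).
  pose proof (sh_pos f Hf u Hu). nra.
Qed.

Lemma shift_diff_signchange (f : R -> R) (a b d : R) :
  strongly_hyperbolic f -> 0 < a -> a < b -> 0 < d ->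
  signchange_root_on_pos (fun u => a * f u - b * f (u + d)).
Proof.
  intros Hf Ha Hab Hd.
  set (G := fun u => a * f u - b * f (u + d)).
  assert (HG : forall u, 0 < u -> is_derive G u (a * Derive f u - b * Derive f (u + d))).
  { intros u Hu. unfold G. auto_derive; change (fun y : R => f y) with f; [| ring].
    split; [| split]; auto; apply sh_ex_derive; auto; lra. }
  pose proof (sh_pos f Hf d Hd).
  destruct (sh_exists_gt f Hf (b * f d / a)) as [u1 [Hu1 Hlarge]].
  assert (HGu1 : 0 < G u1).
  { pose proof (sh_decreasing f Hf d (u1 + d) Hd ltac:(lra)).
    apply Rmult_lt_compat_l with (r := a) in Hlarge; [| exact Ha].
    replace (a * (b * f d / a)) with (b * f d) in Hlarge by (field; lra).
    unfold G. nra. }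
  destruct (eventually_beyond _ u1 (sh_shift_ratio_eventually_gt f Hf d (a / b)
    ltac:(apply (Rdiv_lt_1 a b); lra))) as [u2 [Hu12 Hratio]].
  assert (HGu2 : G u2 < 0).
  { apply Rmult_lt_compat_l with (r := b) in Hratio; [| lra].
    replace (b * (a / b * f u2)) with (a * f u2) in Hratio by (field; lra).
    unfold G. lra. }
  destruct (IVT_interv_decr G u1 u2) as [u0 [Hu0 HG0]]; [exact Hu12 | | lra |].
  { intros u Hu. apply (is_derive_continuity_pt _ _ _ (HG u ltac:(lra))). }
  assert (Hfu0 : a * f u0 = b * f (u0 + d)) by (unfold G in HG0; lra).
  pose proof (sh_pos f Hf u0 ltac:(lra)).
  exists u0. split; [lra |]. split; [exact HG0 |]. split.
  - intros u v Hu Hv. unfold G.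
    pose proof (sh_pos f Hf u ltac:(lra)). pose proof (sh_pos f Hf v ltac:(lra)).
    pose proof (sh_shift_ratio_lt f Hf u u0 d ltac:(lra) ltac:(lra) Hd).
    pose proof (sh_shift_ratio_lt f Hf u0 v d ltac:(lra) ltac:(lra) Hd).
    assert (b * f (u + d) < a * f u) by nra.
    assert (a * f v < b * f (v + d)) by nra.
    nra.
  - exists (a * Derive f u0 - b * Derive f (u0 + d)).
    split; [apply HG; lra | intro E].
    assert (Ea : a * Derive f u0 = b * Derive f (u0 + d)) by lra.
    pose proof (sh_shift_cross_lt f Hf u0 d ltac:(lra) Hd) as Hcross.
    apply Rmult_lt_compat_l with (r := a * b) in Hcross; [| nra].
    replace (a * b * (f (u0 + d) * Derive f u0))
      with (b * f (u0 + d) * (a * Derive f u0)) in Hcross by ring.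
    replace (a * b * (Derive f (u0 + d) * f u0))
      with (a * f u0 * (b * Derive f (u0 + d))) in Hcross by ring.
    rewrite Hfu0, Ea in Hcross. lra.
Qed.

Lemma level_no_root (f : R -> R) (k m : R) :
  strongly_hyperbolic f -> 0 <= k * m -> m <> 0 ->
  no_root Defs.pos (fun u => k * f u + m).
Proof.
  intros Hf Hkm Hm u Hu E. unfold Defs.pos in Hu.
  pose proof (sh_pos f Hf u Hu).
  assert (0 < m * m) by (apply Rsqr_pos_lt, Hm).
  nra.
Qed.

Lemma level_signchange (f : R -> R) (k m : R) :
  strongly_hyperbolic f -> k * m < 0 ->
  signchange_root_on_pos (fun u => k * f u + m).
Proof.
  intros Hf Hkm.
  assert (Hk : k <> 0) by (intros ->; lra).
  assert (Hkk : 0 < k * k) by (apply Rsqr_pos_lt, Hk).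
  set (v := - m / k).
  assert (Hkv : k * v = - m) by (unfold v; field; exact Hk).
  assert (Hv : 0 < v) by nra.
  destruct (sh_surjective f Hf v Hv) as [u0 [Hu0 Hfu0]].
  exists u0. split; [exact Hu0 |]. split; [rewrite Hfu0; lra |]. split.
  - intros u w Hu Hw.
    pose proof (sh_decreasing f Hf u u0 ltac:(lra) ltac:(lra)).
    pose proof (sh_decreasing f Hf u0 w ltac:(lra) ltac:(lra)).
    replace ((k * f u + m) * (k * f w + m)) with (k * k * ((f u - v) * (f w - v)))
      by (replace m with (- (k * v)) by lra; ring).
    assert ((f u - v) * (f w - v) < 0) by (rewrite <- Hfu0; nra).
    nra.
  - exists (k * Derive f u0). split.
    + auto_derive; change (fun y : R => f y) with f; [| ring].
      apply sh_ex_derive; auto.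
    + pose proof (sh_Derive_lt_0 f Hf u0 Hu0). intros E.
      apply Rmult_integral in E as [E | E]; lra.
Qed.

Definition exclusive_signchange (P : Prop) (Gc Gh : R -> R) : Prop :=
  (P -> no_root Defs.pos Gc /\ no_root Defs.pos Gh) /\
  (~ P -> (signchange_root_on_pos Gc /\ no_root Defs.pos Gh) \/
          (signchange_root_on_pos Gh /\ no_root Defs.pos Gc)).

Lemma shift_exclusive_signchange (f1 f2 : R -> R) (a b d : R) :
  strongly_hyperbolic f1 -> strongly_hyperbolic f2 -> 0 < a -> 0 < b -> 0 < d ->
  exclusive_signchange (a = b)
    (fun u => a * f1 u - b * f1 (u + d)) (fun u => b * f2 u - a * f2 (u + d)).
Proof.
  intros Hf1 Hf2 Ha Hb Hd. split.
  - intros <-. split; apply shift_diff_no_root; auto; lra.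
  - intros Hab. destruct (Rdichotomy a b Hab) as [H | H]; [left | right]; split.
    + apply shift_diff_signchange; auto.
    + apply shift_diff_no_root; auto; lra.
    + apply shift_diff_signchange; auto.
    + apply shift_diff_no_root; auto; lra.
Qed.

Lemma level_exclusive_signchange (f1 f2 : R -> R) (k m : R) :
  strongly_hyperbolic f1 -> strongly_hyperbolic f2 -> m <> 0 ->
  exclusive_signchange (k = 0) (fun u => k * f1 u + m) (fun u => - k * f2 u + m).
Proof.
  intros Hf1 Hf2 Hm. split.
  - intros ->. split; apply level_no_root; auto; lra.
  - intros Hk. assert (Hkm : k * m <> 0) by (apply Rmult_integral_contrapositive; auto).
    destruct (Rdichotomy _ _ Hkm) as [H | H]; [left | right]; split.
    + apply level_signchange; auto.
    + apply level_no_root; auto; lra.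
    + apply level_signchange; auto; lra.
    + apply level_no_root; auto; lra.
Qed.

Definition affine_pullback (D : R -> Prop) (g G : R -> R) : Prop :=
  exists s sigma tau, s <> 0 /\ sigma <> 0 /\
    (forall x, D x <-> 0 < sigma * x + tau) /\
    (forall x, D x -> g x = s * G (sigma * x + tau)).

Lemma no_root_pullback (D : R -> Prop) (g G : R -> R) :
  affine_pullback D g G -> no_root Defs.pos G -> no_root D g.
Proof.
  intros (s & sigma & tau & Hs & _ & HD & Hg) HG x Dx E.
  rewrite Hg in E by exact Dx.
  apply Rmult_integral in E as [E | E]; [contradiction |].
  apply (HG (sigma * x + tau)); [apply HD |]; assumption.
Qed.

Lemma signchange_opposite_sides (G : R -> R) (u0 : R) :
  (forall u v, 0 < u < u0 -> u0 < v -> G u * G v < 0) ->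
  forall p q, 0 < p -> 0 < q -> (p - u0) * (q - u0) < 0 -> G p * G q < 0.
Proof.
  intros Hsign p q Hp Hq Hpq.
  destruct (Rlt_or_le p u0) as [H | H].
  - apply Hsign; nra.
  - rewrite Rmult_comm. apply Hsign; nra.
Qed.

Lemma unique_signchange_root_pullback (D : R -> Prop) (g G : R -> R) :
  affine_pullback D g G -> signchange_root_on_pos G -> unique_signchange_root D g.
Proof.
  intros (s & sigma & tau & Hs & Hsigma & HD & Hg)
    (u0 & Hu0 & HG0 & Hsign & dG & HdG & HdG0).
  pose proof (signchange_opposite_sides G u0 Hsign) as Hopp.
  set (x0 := (u0 - tau) / sigma).
  assert (Hshift : forall x, sigma * x + tau - u0 = sigma * (x - x0))
    by (intros x; unfold x0; field; exact Hsigma).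
  assert (Hss : 0 < s * s) by (apply Rsqr_pos_lt, Hs).
  assert (Hsigsig : 0 < sigma * sigma) by (apply Rsqr_pos_lt, Hsigma).
  assert (Habs : 0 < Rabs sigma) by (apply Rabs_pos_lt, Hsigma).
  set (eps := u0 / Rabs sigma).
  assert (Heps : 0 < eps) by (apply Rdiv_lt_0_compat; assumption).
  assert (Hnear : forall x, Rabs (x - x0) < eps -> D x).
  { intros x Hx. apply HD.
    assert (Rabs (sigma * x + tau - u0) < u0).
    { rewrite Hshift, Rabs_mult.
      apply Rmult_lt_compat_l with (r := Rabs sigma) in Hx; [| exact Habs].
      replace (Rabs sigma * eps) with u0 in Hx by (unfold eps; field; lra). exact Hx. }
    apply Rabs_lt_between in H. lra. }
  assert (Dx0 : D x0) by (apply Hnear; rewrite Rminus_diag, Rabs_R0; exact Heps).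
  assert (Hx0 : sigma * x0 + tau = u0) by (pose proof (Hshift x0); lra).
  exists x0. split; [exact Dx0 |]. split; [rewrite Hg, Hx0, HG0 by exact Dx0; ring |].
  split; [| split].
  - intros x Dx Hgx. rewrite Hg in Hgx by exact Dx.
    apply Rmult_integral in Hgx as [Hgx | HGx]; [contradiction |].
    apply HD in Dx.
    assert (Hroot : sigma * x + tau = u0).
    { destruct (Rtotal_order (sigma * x + tau) u0) as [Hlt | [Heq | Hgt]];
        [| exact Heq |];
        exfalso.
      - pose proof (Hopp _ (u0 + 1) Dx ltac:(lra) ltac:(nra)). rewrite HGx in H. lra.
      - pose proof (Hopp _ (u0 / 2) Dx ltac:(lra) ltac:(nra)). rewrite HGx in H. lra. }
    pose proof (Hshift x) as Hx. rewrite Hroot, Rminus_diag in Hx.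
    symmetry in Hx. apply Rmult_integral in Hx as [Hx | Hx]; [contradiction | lra].
  - exists eps. split; [exact Heps |]. intros x y Hx Hy.
    assert (Dx : D x) by (apply Hnear, Rabs_def1; lra).
    assert (Dy : D y) by (apply Hnear, Rabs_def1; lra).
    rewrite !Hg by assumption.
    assert (HGG : G (sigma * x + tau) * G (sigma * y + tau) < 0).
    { apply Hopp; [apply HD, Dx | apply HD, Dy |]. rewrite !Hshift.
      replace (sigma * (x - x0) * (sigma * (y - x0)))
        with (sigma * sigma * ((x - x0) * (y - x0))) by ring.
      assert ((x - x0) * (y - x0) < 0) by nra. nra. }
    nra.
  - exists (s * (sigma * dG)). split.
    + apply is_derive_ext_loc with (fun x => s * G (sigma * x + tau)).
      * exists (mkposreal eps Heps). intros x Hx. symmetry. apply Hg, Hnear, Hx.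
      * apply is_derive_scal.
        apply (is_derive_comp G (fun x => sigma * x + tau)); [rewrite Hx0; exact HdG |].
        auto_derive; [exact I | ring].
    + intros E. apply Rmult_integral in E as [E | E]; [contradiction |].
      apply Rmult_integral in E as [E | E]; contradiction.
Qed.

Lemma exclusive_signchange_pullback (P Q : Prop) (Dc Dh : R -> Prop)
    (gc gh Gc Gh : R -> R) :
  (P <-> Q) -> affine_pullback Dc gc Gc -> affine_pullback Dh gh Gh ->
  exclusive_signchange Q Gc Gh ->
  (P -> no_root Dc gc /\ no_root Dh gh) /\
  (~ P -> (unique_signchange_root Dc gc /\ no_root Dh gh) \/
          (unique_signchange_root Dh gh /\ no_root Dc gc)).
Proof.
  intros HPQ Hc Hh [Hsame Hdiff]. split.
  - intros HP. destruct (Hsame (proj1 HPQ HP)).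
    split; eapply no_root_pullback; eassumption.
  - intros HP. destruct Hdiff as [[? ?] | [? ?]]; [tauto | left | right];
      split; eauto using no_root_pullback, unique_signchange_root_pullback.
Qed.

Lemma check_dom_iff (b1 b2 x : R) : check_dom b1 b2 x <-> 0 < x + Rmin b1 b2.
Proof.
  unfold check_dom, Rmax, Rmin.
  destruct (Rle_dec (- b1) (- b2)), (Rle_dec b1 b2); split; intros; lra.
Qed.

Lemma hat_dom_iff (b1 b2 x : R) : hat_dom b1 b2 x <-> 0 < - x - Rmax b1 b2.
Proof.
  unfold hat_dom, Rmax, Rmin.
  destruct (Rle_dec (- b1) (- b2)), (Rle_dec b1 b2); split; intros; lra.
Qed.

Lemma shift_pullbacks_le (f1 f2 : R -> R) (a1 a2 b1 b2 c : R) : b1 <= b2 ->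
  affine_pullback (check_dom b1 b2) (fcheck f1 a1 a2 b1 b2 c c)
    (fun u => a1 * f1 u - a2 * f1 (u + (b2 - b1))) /\
  affine_pullback (hat_dom b1 b2) (fhat f2 a1 a2 b1 b2 c c)
    (fun u => a2 * f2 u - a1 * f2 (u + (b2 - b1))).
Proof.
  intros Hb. split; [exists 1, 1, b1 | exists 1, (-1), (- b2)];
    (split; [lra |]); (split; [lra |]); split; intros x.
  - rewrite check_dom_iff, Rmin_left by exact Hb. lra.
  - intros _. unfold fcheck.
    replace (1 * x + b1 + (b2 - b1)) with (x + b2) by ring. rewrite !Rmult_1_l. ring.
  - rewrite hat_dom_iff, Rmax_right by exact Hb. lra.
  - intros _. unfold fhat.
    replace (-1 * x + - b2) with (- x - b2) by ring.
    replace (- x - b2 + (b2 - b1)) with (- x - b1) by ring. ring.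
Qed.

Lemma shift_pullbacks_ge (f1 f2 : R -> R) (a1 a2 b1 b2 c : R) : b2 <= b1 ->
  affine_pullback (check_dom b1 b2) (fcheck f1 a1 a2 b1 b2 c c)
    (fun u => a2 * f1 u - a1 * f1 (u + (b1 - b2))) /\
  affine_pullback (hat_dom b1 b2) (fhat f2 a1 a2 b1 b2 c c)
    (fun u => a1 * f2 u - a2 * f2 (u + (b1 - b2))).
Proof.
  intros Hb. split; [exists (-1), 1, b2 | exists (-1), (-1), (- b1)];
    (split; [lra |]); (split; [lra |]); split; intros x.
  - rewrite check_dom_iff, Rmin_right by exact Hb. lra.
  - intros _. unfold fcheck.
    replace (1 * x + b2 + (b1 - b2)) with (x + b1) by ring. rewrite !Rmult_1_l. ring.
  - rewrite hat_dom_iff, Rmax_left by exact Hb. lra.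
  - intros _. unfold fhat.
    replace (-1 * x + - b1) with (- x - b1) by ring.
    replace (- x - b1 + (b1 - b2)) with (- x - b2) by ring. ring.
Qed.

Lemma level_pullbacks (f1 f2 : R -> R) (a1 a2 b c1 c2 : R) :
  affine_pullback (check_dom b b) (fcheck f1 a1 a2 b b c1 c2)
    (fun u => (a1 - a2) * f1 u + (c1 - c2)) /\
  affine_pullback (hat_dom b b) (fhat f2 a1 a2 b b c1 c2)
    (fun u => - (a1 - a2) * f2 u + (c1 - c2)).
Proof.
  split; [exists 1, 1, b | exists 1, (-1), (- b)];
    (split; [lra |]); (split; [lra |]); split; intros x.
  - rewrite check_dom_iff, Rmin_left by lra. lra.
  - intros _. unfold fcheck. rewrite !Rmult_1_l. ring.
  - rewrite hat_dom_iff, Rmax_left by lra. lra.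
  - intros _. unfold fhat. replace (-1 * x + - b) with (- x - b) by ring. ring.
Qed.

Theorem lemma3p6 (f1 f2 : R -> R) (a1 a2 b1 b2 c1 c2 : R) :
  strongly_hyperbolic f1 -> strongly_hyperbolic f2 ->
  0 < a1 -> 0 < a2 ->
  ((b1 <> b2 /\ c1 = c2) \/ (b1 = b2 /\ c1 <> c2)) ->
  (a1 = a2 ->
     no_root (check_dom b1 b2) (fcheck f1 a1 a2 b1 b2 c1 c2) /\
     no_root (hat_dom b1 b2) (fhat f2 a1 a2 b1 b2 c1 c2)) /\
  (a1 <> a2 ->
     (unique_signchange_root (check_dom b1 b2) (fcheck f1 a1 a2 b1 b2 c1 c2) /\
      no_root (hat_dom b1 b2) (fhat f2 a1 a2 b1 b2 c1 c2)) \/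
     (unique_signchange_root (hat_dom b1 b2) (fhat f2 a1 a2 b1 b2 c1 c2) /\
      no_root (check_dom b1 b2) (fcheck f1 a1 a2 b1 b2 c1 c2))).
Proof.
  intros Hf1 Hf2 Ha1 Ha2 [[Hb <-] | [<- Hc]].
  - destruct (Rdichotomy b1 b2 Hb) as [Hlt | Hgt].
    + destruct (shift_pullbacks_le f1 f2 a1 a2 b1 b2 c1 (Rlt_le _ _ Hlt)) as [Pc Ph].
      apply (exclusive_signchange_pullback (a1 = a2) (a1 = a2) _ _ _ _ _ _
        (iff_refl _) Pc Ph).
      apply shift_exclusive_signchange; auto; lra.
    + destruct (shift_pullbacks_ge f1 f2 a1 a2 b1 b2 c1 (Rlt_le _ _ Hgt)) as [Pc Ph].
      apply (exclusive_signchange_pullback (a1 = a2) (a2 = a1) _ _ _ _ _ _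
        ltac:(split; intros; lra) Pc Ph).
      apply shift_exclusive_signchange; auto; lra.
  - destruct (level_pullbacks f1 f2 a1 a2 b1 c1 c2) as [Pc Ph].
    apply (exclusive_signchange_pullback (a1 = a2) (a1 - a2 = 0) _ _ _ _ _ _
      ltac:(split; intros; lra) Pc Ph).
    apply level_exclusive_signchange; auto; lra.
Qed.
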